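(* For every simple graph $G$ of order $n$ with spectral radius $\mu(G)$, \[ \frac{n}{n - \mu(G)} < \phi(G) + \frac{1}{3}. \]
   Context: $\mu(G)$ denotes the largest eigenvalue of the adjacency matrix of $G$. $\phi(G)$ is the smallest integer $r$ for which the vertex set has a partition $V(G) = V_1 \cup \dots \cup V_r$ into $r$ parts such that, writing $n_i = |V_i|$, every vertex $v \in V_i$ has degree $d(v) \le n - n_i$, for all $i = 1,\dots,r$. *)

From HB Require Import structures.
From mathcomp Require Import all_boot all_order all_algebra.
Set Implicit Arguments. Unset Strict Implicit. Unset Printing Implicit Defensive.
Import Order.TTheory GRing.Theory Num.Theory.

Definition simple_graph (n : nat) (e : rel 'I_n) : Prop :=
  symmetric e /\ irreflexive e.

Definition deg (n : nat) (e : rel 'I_n) (v : 'I_n) : nat := #|[set u | (u != v) && e v u]|.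
(* (loops are excluded; for simple graphs this is the usual degree) *)

Definition adj_mx (R : nzRingType) (n : nat) (e : rel 'I_n) : 'M[R]_n :=
  \matrix_(i, j) ((e i j)%:R)%R.

Definition is_spectral_radius (R : rcfType) (n : nat) (e : rel 'I_n) (mu : R) : Prop :=
  eigenvalue (adj_mx R e) mu /\ (forall a : R, eigenvalue (adj_mx R e) a -> (a <= mu)%R).

(* There is a partition of V into r (possibly empty) labelled parts
   V_i = f^-1(i) such that every v in V_i has d(v) <= n - |V_i|. *)
Definition phi_partition (n : nat) (e : rel 'I_n) (r : nat) : bool :=
  [exists f : {ffun 'I_n -> 'I_r},
     [forall v : 'I_n, deg e v <= n - #|[set u | f u == f v]| ]].

Lemma phi_partition_ex (n : nat) (e : rel 'I_n) : exists r, phi_partition e r.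
Proof.
exists n; apply/existsP; exists [ffun v => v]; apply/forallP => v.
rewrite (_ : [set u | [ffun v => v] u == [ffun v => v] v] = [set v]); last first.
  by apply/setP => u; rewrite !inE !ffunE.
rewrite cards1 /deg.
have H : [set u | (u != v) && e v u] \subset [set~ v].
  by apply/subsetP => u; rewrite !inE => /andP[].
apply: (leq_trans (subset_leq_card H)).
by rewrite cardsC1 card_ord subn1.
Qed.

Definition phi (n : nat) (e : rel 'I_n) : nat := ex_minn (phi_partition_ex e).

From HB Require Import structures.
From mathcomp Require Import all_boot all_order all_algebra.
From mathcomp Require Import ring lra.

Set Implicit Arguments.
Unset Strict Implicit.
Unset Printing Implicit Defensive.
Import Order.TTheory GRing.Theory Num.Theory.
Local Open Scope ring_scope.

(* Normalise the moduli of an eigenvector for mu to a probability vector y.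
   Then |mu| y_j is at most the weight of the neighbourhood of j, so that
   (|mu| + 1) y_j <= 1 and |mu| <= sum_i y_i d(i).  For a partition into
   r = phi(G) blocks of sizes a_l and weights Y_l, the degree condition gives
   sum_l a_l Y_l <= n - |mu|, while (|mu| + 1) Y_l <= a_l.  Comparing every
   Y_l with the least block weight m, and bounding the other r - 1 weights by
   Cauchy-Schwarz, leaves a polynomial inequality in r, m and mu whose only
   way out is 3n < (3r + 1)(n - mu). *)

Section RealInequalities.
Variable R : realFieldType.

Lemma sqr_sum_le_card_sum_sqr (I : finType) (P : pred I) (F : I -> R) :
  (\sum_(i | P i) F i) ^+ 2 <= #|P|%:R * \sum_(i | P i) F i ^+ 2.
Proof.
have [P0|Ppos] := posnP #|P|.
  rewrite P0 mul0r big_pred0 ?expr0n // => i.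
  by apply/negbTE; rewrite -[P i]/(i \in P) (card0_eq P0).
set S := \sum_(i | P i) F i; set c : R := #|P|%:R.
have c_gt0 : 0 < c by rewrite ltr0n.
set u := S / c.
have var_ge0 : 0 <= \sum_(i | P i) (F i - u) ^+ 2.
  by apply: sumr_ge0 => i _; apply: sqr_ge0.
have var_expand : \sum_(i | P i) (F i - u) ^+ 2
    = \sum_(i | P i) F i ^+ 2 - (2 * u) * S + c * u ^+ 2.
  rewrite (eq_bigr (fun i => F i ^+ 2 + (- ((2 * u) * F i)) + u ^+ 2)); last first.
    by move=> i _; ring.
  by rewrite !big_split /= sumrN -mulr_sumr sumr_const /c [#|P|%:R * _]mulr_natl.
have Su : S = u * c by rewrite /u divfK // gt_eqF.
rewrite var_expand Su in var_ge0 *.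
have : 0 <= c * (\sum_(i | P i) F i ^+ 2 - c * u ^+ 2) by nra.
nra.
Qed.

(* The inequality [sum_l (a_l - c Y_l) (Y_l - m) >= 0], expanded. *)
Lemma sum_weights_sqr_bound (I : finType) (a Y : I -> R) (c m : R) :
  (forall l, c * Y l <= a l) -> (forall l, m <= Y l) ->
  c * \sum_l Y l ^+ 2 + m * \sum_l a l - c * m * \sum_l Y l <= \sum_l a l * Y l.
Proof.
move=> caY mY.
have : 0 <= \sum_l (a l - c * Y l) * (Y l - m).
  by apply: sumr_ge0 => l _; apply: mulr_ge0; rewrite subr_ge0.
rewrite (eq_bigr (fun l => a l * Y l - m * a l - c * Y l ^+ 2 + c * m * Y l)); last first.
  by move=> l _; ring.
rewrite !big_split /= !sumrN -!mulr_sumr.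
lra.
Qed.

Lemma block_quadratic_gt0 (r m : R) : 1 < r ->
  0 < (3 * r ^+ 2 - 2 * r) * m ^+ 2 - (3 * r - 1) * m + 1.
Proof.
move=> r_gt1; set p := 3 * r ^+ 2 - 2 * r.
have p_gt0 : 0 < p by rewrite /p; nra.
(* The discriminant is [(3r - 1)^2 - 4p = -(3r + 1)(r - 1) < 0]. *)
have : 0 < 4 * p * (p * m ^+ 2 - (3 * r - 1) * m + 1).
  have -> : 4 * p * (p * m ^+ 2 - (3 * r - 1) * m + 1)
      = (2 * p * m - (3 * r - 1)) ^+ 2 + (3 * r + 1) * (r - 1) by rewrite /p; ring.
  have := sqr_ge0 (2 * p * m - (3 * r - 1)).
  have : 0 < (3 * r + 1) * (r - 1) by nra.
  lra.
nra.
Qed.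

Lemma block_weights_ineq (r n mu s m t : R) :
  1 <= r -> 0 < n -> s <= n - mu ->
  (mu + 1) * (m ^+ 2 + t) + m * n - (mu + 1) * m <= s ->
  (1 - m) ^+ 2 <= (r - 1) * t -> 0 <= t -> r * m <= 1 ->
  3 * n < (3 * r + 1) * (n - mu).
Proof.
move=> r_ge1 n_gt0 s_le s_ge cauchy t_ge0 rm_le1.
set q := m ^+ 2 + t - m.
have [r1|r_neq1] := eqVneq r 1.
  have m1 : m = 1.
    move: cauchy; rewrite r1 subrr mul0r => cauchy.
    have /eqP : (1 - m) ^+ 2 = 0 by apply/eqP; rewrite eq_le cauchy sqr_ge0.
    by rewrite sqrf_eq0 subr_eq0 => /eqP.
  subst r m; rewrite /q in s_ge; nra.
have r_gt1 : 1 < r by rewrite lt_neqAle eq_sym r_neq1 r_ge1.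
have rq : (r * m - 1) * (m - 1) <= (r - 1) * q by rewrite /q; nra.
have q_ge0 : 0 <= q.
  have m_le1 : m <= 1 by nra.
  have : 0 <= (r - 1) * q by nra.
  by rewrite pmulr_rge0 // subr_gt0.
have qm_gt3 : 3 < (3 * r - 2) * q + (3 * r + 1) * m.
  have quad := block_quadratic_gt0 m r_gt1.
  (* Multiply [rq] by [3r - 2]: the excess over [3(r - 1)] is the quadratic. *)
  have : 3 * (r - 1) < (r - 1) * ((3 * r - 2) * q + (3 * r + 1) * m) by nra.
  by rewrite [_ * (_ + _)]mulrC ltr_pM2r // subr_gt0.
have qs : (mu + 1) * q + m * n <= s by rewrite /q; nra.
rewrite ltNge; apply/negP => le_mu.
have : n * (3 * r - 2) <= (3 * r + 1) * (mu + 1) by nra.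
nra.
Qed.

Lemma block_weights_bound (I : finType) (i0 : I) (a Y : I -> R) (n mu : R) :
  0 < n -> \sum_l Y l = 1 -> \sum_l a l = n ->
  (forall l, (mu + 1) * Y l <= a l) -> \sum_l a l * Y l <= n - mu ->
  3 * n < (3 * #|I|%:R + 1) * (n - mu).
Proof.
move=> n_gt0 sumY suma aY s_le.
case: (@arg_minP _ R I i0 xpredT Y isT) => l0 _ Y_min.
set m := Y l0; set t := \sum_(l | l != l0) Y l ^+ 2.
have I_gt0 : (0 < #|I|)%N by apply/card_gt0P; exists i0.
have r_ge1 : 1 <= #|I|%:R :> R by rewrite ler1n.
have rm_le1 : #|I|%:R * m <= 1.
  have -> : #|I|%:R * m = \sum_(l : I) m by rewrite sumr_const mulr_natl.
  rewrite -sumY.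
  by apply: ler_sum => l _; exact: Y_min.
have key := sum_weights_sqr_bound aY (fun l => Y_min l isT).
rewrite suma sumY mulr1 (bigD1 l0) //= -/m -/t in key.
have sumY' : \sum_(l | l != l0) Y l = 1 - m.
  by move: sumY; rewrite (bigD1 l0) //= -/m => ?; lra.
have cauchy := sqr_sum_le_card_sum_sqr (predC1 l0) Y.
rewrite cardC1 sumY' -subn1 natrB // in cauchy.
have t_ge0 : 0 <= t by apply: sumr_ge0 => l _; exact: sqr_ge0.
exact: block_weights_ineq r_ge1 n_gt0 s_le key cauchy t_ge0 rm_le1.
Qed.

Lemma ratio_lt_add_third (n nu r : R) : 0 <= n -> 0 <= r ->
  3 * n < (3 * r + 1) * (n - nu) -> n / (n - nu) < r + 3^-1.
Proof.
move=> n_ge0 r_ge0 bound.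
have n_nu_gt0 : 0 < n - nu.
  by move: bound; rewrite -(pmulr_rgt0 _ (_ : 0 < 3 * r + 1)); lra.
rewrite ltr_pdivrMr // -(ltr_pM2l (_ : 0 < 3 :> R)) ?ltr0n //.
have -> : 3 * ((r + 3^-1) * (n - nu)) = (3 * r + 1) * (n - nu) by field.
exact: bound.
Qed.

End RealInequalities.

Section WeightVector.
Variables (R : realFieldType) (n : nat).

Lemma eigenvalue_weight_vector (A : 'M[R]_n) (mu : R) :
  (forall i j, 0 <= A i j) -> eigenvalue A mu ->
  exists2 y : 'I_n -> R, (forall j, 0 <= y j) /\ \sum_j y j = 1
    & forall j, `|mu| * y j <= \sum_i y i * A i j.
Proof.
move=> A_ge0 /eigenvalueP[x xA x_neq0].
pose z j := `|x 0 j|; set Z := \sum_j z j.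
have z_ge0 j : 0 <= z j by exact: normr_ge0.
have Z_gt0 : 0 < Z.
  rewrite lt_def sumr_ge0 ?andbT //; apply: contra x_neq0 => /eqP Z0.
  apply/eqP/rowP => j; rewrite mxE.
  exact/normr0_eq0/(psumr_eq0P (fun i _ => z_ge0 i) Z0).
exists (fun j => z j / Z).
  split=> [j|]; first by rewrite divr_ge0 // ltW.
  by rewrite -mulr_suml divff // gt_eqF.
move=> j; under eq_bigr do rewrite mulrAC.
rewrite mulrA -mulr_suml ler_pM2r ?invr_gt0 //.
have -> : `|mu| * z j = `|(x *m A) 0 j| by rewrite xA mxE normrM.
rewrite mxE; apply: le_trans (ler_norm_sum _ _ _) _.
by apply: ler_sum => i _; rewrite normrM (ger0_norm (A_ge0 i j)).
Qed.

Variables (e : rel 'I_n) (mu : R) (y : 'I_n -> R).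
Hypotheses (e_irr : irreflexive e) (y_ge0 : forall j, 0 <= y j)
  (y_sum1 : \sum_j y j = 1)
  (y_eig : forall j, `|mu| * y j <= \sum_i y i * (e i j)%:R).

Lemma sum_adj_row i : \sum_j ((e i j)%:R : R) = (deg e i)%:R.
Proof.
rewrite /deg -sum1_card natr_sum big_mkcond [RHS]big_mkcond /=.
apply: eq_bigr => j _; rewrite inE.
by case: (eqVneq j i) => [->|_]; rewrite ?e_irr //; case: (e i j).
Qed.

Lemma weight_vector_le j : (`|mu| + 1) * y j <= 1.
Proof.
have nbhd_le : \sum_i y i * (e i j)%:R <= \sum_(i | i != j) y i.
  rewrite (bigD1 j) //= e_irr mulr0 add0r.
  by apply: ler_sum => i _; case: (e i j); rewrite ?mulr1 ?mulr0.
have := y_sum1; rewrite (bigD1 j) //= => y_split.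
have := y_eig j; lra.
Qed.

Lemma abs_eig_le_weighted_deg : `|mu| <= \sum_i y i * (deg e i)%:R.
Proof.
have -> : `|mu| = \sum_j `|mu| * y j by rewrite -mulr_sumr y_sum1 mulr1.
apply: le_trans (ler_sum _ (fun j _ => y_eig j)) _.
rewrite exchange_big /=; apply: ler_sum => i _.
by rewrite -mulr_sumr sum_adj_row.
Qed.

Lemma partition_degree_bound (I : finType) (f : 'I_n -> I) :
  (forall v, deg e v <= n - #|[set u | f u == f v]|)%N ->
  3 * n%:R < (3 * #|I|%:R + 1) * (n%:R - `|mu|).
Proof.
move=> f_deg.
have [v _|no_vertex] := pickP (@predT 'I_n); last first.
  by move: y_sum1; rewrite big_pred0 // => /eqP; rewrite eq_sym oner_eq0.
pose a l : R := #|[set u | f u == l]|%:R.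
pose Y l := \sum_(i | f i == l) y i.
have a_sum l : a l = \sum_(i | f i == l) 1.
  by rewrite /a -sum1_card natr_sum; apply: eq_bigl => i; rewrite inE.
apply: (@block_weights_bound _ _ (f v) a Y).
- by rewrite ltr0n (leq_ltn_trans (leq0n v) (ltn_ord v)).
- by rewrite -y_sum1 (partition_big f xpredT).
- rewrite -[n in n%:R]card_ord -sumr_const (partition_big f xpredT) //=.
  by apply: eq_bigr => l _; rewrite a_sum.
- move=> l; rewrite a_sum /Y mulr_sumr; apply: ler_sum => i _.
  exact: weight_vector_le.
have -> : \sum_l a l * Y l = \sum_i y i * a (f i).
  rewrite (partition_big f xpredT) //=; apply: eq_bigr => l _.
  by rewrite /Y mulr_sumr; apply: eq_big => [i|i /eqP <-] //; rewrite mulrC.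
have deg_le i : (deg e i)%:R <= n%:R - a (f i).
  rewrite -natrB ?ler_nat ?f_deg //.
  by rewrite -[X in (_ <= X)%N](card_ord n) max_card.
have : \sum_i y i * (deg e i)%:R <= \sum_i y i * (n%:R - a (f i)).
  by apply: ler_sum => i _; apply: ler_wpM2l.
under [X in _ <= X]eq_bigr do rewrite mulrBr.
rewrite sumrB -mulr_suml y_sum1 mul1r.
have := abs_eig_le_weighted_deg; lra.
Qed.

End WeightVector.

Theorem corollary12 (R : rcfType) (n : nat) (e : rel 'I_n) (mu : R) :
  simple_graph e -> is_spectral_radius e mu ->
  n%:R / (n%:R - mu) < (phi e)%:R + 3%:R^-1.
Proof.
move=> [_ e_irr] [eig_mu _].
have adj_ge0 i j : 0 <= adj_mx R e i j by rewrite mxE ler0n.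
have [y [y_ge0 y_sum1] y_eig] := eigenvalue_weight_vector adj_ge0 eig_mu.
have /existsP[f /forallP f_deg] : phi_partition e (phi e).
  by rewrite /phi; case: ex_minnP.
have y_nbhd j : `|mu| * y j <= \sum_i y i * (e i j)%:R.
  by have := y_eig j; under eq_bigr do rewrite mxE.
have := partition_degree_bound e_irr y_ge0 y_sum1 y_nbhd f_deg.
rewrite card_ord => bound.
apply: ratio_lt_add_third => //; apply: (lt_le_trans bound).
by rewrite ler_wpM2l ?lerB ?ler_norm // addr_ge0 ?mulr_ge0.
Qed.
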